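(* In the slot formulation of the weighted balls-into-bins process, for every $a$ with $0<a<\lambda/2$ and $Sa\le 1/2$, and every $t\ge0$, $$\mathbb E\left[\Psi(x^s(t+1))-\Psi(x^s(t))\,\middle|\,x^s(t)\right]\le\frac{3a}{2N}\Psi(x^s(t)).$$
   Context: Weighted balls into weighted bins: $n$ bins with positive integer weights $N_1,\dots,N_n$, $N=\sum_iN_i$; $\mathcal D$ on $[n]$ is $(\alpha,\beta)$-biased, i.e. $\frac{N_i}{\alpha N}\le\Pr_{\mathcal D}[i]\le\frac{\beta N_i}{N}$. Ball weights $w(t)$ are i.i.d. from $\mathcal W$ on $[0,\infty)$ with $\mathbb E[\mathcal W]=1$ and $M(z)=\mathbb E[e^{z\mathcal W}]$ finite at $z=\lambda$ for some $\lambda>0$; $S\ge1$ is a constant with $M''(z)\le2S$ for all $|z|<\lambda/2$. Each round two bins are sampled independently from $\mathcal D$ and the ball goes to the sampled bin with smaller value $v_i(t-1)=w_i(t-1)/N_i$. Slot formulation: bin $i$ consists of $N_i$ unit slots; the normalized slot vector $x^s(t)\in\mathbb R^N$ has, for each slot of bin $i$, the entry $v_i(t)-\frac1N\sum_{t'\le t}w(t')$, indexed so that $x^s_1(t)\ge\dots\ge x^s_N(t)$. $\Psi(y)=\sum_je^{-ay_j}$. *)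

From HB Require Import structures.
From mathcomp Require Import all_boot all_order all_algebra.
From mathcomp Require Import all_classical all_reals all_analysis.
Set Implicit Arguments. Unset Strict Implicit. Unset Printing Implicit Defensive.
Import Order.TTheory GRing.Theory Num.Theory.
Local Open Scope ring_scope.

Section BB.
Variables (R : realType) (n : nat) (Nw : 'I_n -> nat).

Definition Ntot : nat := (\sum_(i < n) Nw i)%N.

(* slots: bin i consists of N_i unit slots *)
Definition slot := {i : 'I_n & 'I_(Nw i)}.

Definition value (load : 'I_n -> R) (i : 'I_n) : R := load i / (Nw i)%:R.

Definition total_weight (load : 'I_n -> R) : R := \sum_(i < n) load i.

(* normalized slot vector x^s(t) (unsorted; sorting does not affect Psi) *)
Definition xs (load : 'I_n -> R) (s : slot) : R :=
  value load (tag s) - total_weight load / (Ntot)%:R.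

Definition Psi (a : R) (load : 'I_n -> R) : R :=
  \sum_(s : slot) expR (- a * xs load s).

Definition chosen (tb : 'I_n -> 'I_n -> bool) (load : 'I_n -> R)
    (i j : 'I_n) : 'I_n :=
  if value load i < value load j then i
  else if value load j < value load i then j
  else if tb i j then i else j.

Definition allocate (load : 'I_n -> R) (k : 'I_n) (w : R) : 'I_n -> R :=
  fun i => if i == k then load i + w else load i.

Definition biased (alpha beta : R) (p : 'I_n -> R) : Prop :=
  forall i, (Nw i)%:R / (alpha * (Ntot)%:R) <= p i /\
            p i <= beta * (Nw i)%:R / (Ntot)%:R.

(* E[Psi(x^s(t+1)) | state at time t]: two bins sampled independently from p,
   ball weight drawn from P independently *)
Definition expected_next_Psi (d : measure_display) (T : measurableType d)
    (P : probability T R) (wt : T -> R) (tb : 'I_n -> 'I_n -> bool)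
    (p : 'I_n -> R) (a : R) (load : 'I_n -> R) : \bar R :=
  (\sum_(i < n) \sum_(j < n)
     (p i * p j)%:E *
       \int[P]_x (Psi a (allocate load (chosen tb load i j) (wt x)))%:E)%E.

End BB.

Definition mgf (R : realType) (P : probability R R) (z : R) : R :=
  fine (\int[P]_x (expR (z * x))%:E)%E.

From HB Require Import structures.
From mathcomp Require Import all_boot all_order all_algebra.
From mathcomp Require Import all_classical all_reals all_analysis.
From mathcomp Require Import measurable_realfun.
From mathcomp Require Import ring lra.
Import Order.TTheory GRing.Theory Num.Theory.
Import numFieldNormedType.Exports.
Local Open Scope ring_scope.
Local Open Scope classical_set_scope.

(* Placing a ball of weight w in bin k raises every slot value by w/N relative
   to the mean and lowers the slots of bin k by a further w/N_k, so each term
   e^{-a x_s} of Psi gets multiplied by e^{z_s w} with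
   z_s = a/N - [s in bin k] a/N_k and |z_s| <= a < lam/2.  Since M(0) = 1,
   M'(0) = E W = 1 and M'' <= 2S on (-lam/2, lam/2), a second-order Taylor
   bound gives E e^{z W} <= 1 + z + 2 S z^2, and S a <= 1/2 makes
   z_s + 2 S z_s^2 <= 3a/(2N) whatever bin k receives the ball; averaging over
   the two sampled bins keeps the bound. *)

Section RealFacts.
Context {R : realType}.

Lemma is_derive_expRMr (c x : R) :
  is_derive x 1 (fun z => expR (z * c)) (c * expR (x * c)).
Proof.
have lin : is_derive x 1 ( *%R c) c.
  by have := is_deriveZ c (@is_derive_id _ _ x 1); rewrite /GRing.scale /= mulr1.
have -> : (fun z => expR (z * c)) = expR \o *%R c.
  by apply/funext => z /=; rewrite mulrC.
by rewrite mulrC (mulrC x); exact: (is_derive1_comp (is_derive_expR _) lin).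
Qed.

Lemma continuous_expRMl (c : R) : continuous (fun x : R => expR (c * x)).
Proof.
move=> x; apply: continuous_comp; last exact: continuous_expR.
exact: (@continuousM _ _ (cst c) id x (cvg_cst _) cvg_id).
Qed.

Lemma exprn_le_expR (L c : R) (k : nat) : 0 < L -> 0 <= c ->
  c ^+ k <= k`!%:R / L ^+ k * expR (L * c).
Proof.
move=> L0 c0; have Lc0 : 0 <= L * c by rewrite mulr_ge0 // ltW.
case: k => [|k]; first by rewrite fact0 !expr0 divr1 mul1r -expR0 ler_expR.
have fact_gt0 : 0 < k.+1`!%:R :> R by rewrite ltr0n fact_gt0.
have Lk_gt0 : 0 < L ^+ k.+1 by rewrite exprn_gt0.
have -> : c ^+ k.+1 = k.+1`!%:R / L ^+ k.+1 * ((L * c) ^+ k.+1 / k.+1`!%:R).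
  rewrite exprMn; move: (L ^+ _) Lk_gt0 (k.+1`!%:R) fact_gt0 => X X0 F F0.
  by field; rewrite ?gt_eqF.
apply: ler_wpM2l; first by rewrite divr_ge0 ?ltW.
by apply: le_trans (expR_ge1Dxn k Lc0); rewrite lerDr.
Qed.

Definition between (x y t : R) := (x <= t <= y) || (y <= t <= x).

Lemma MVT_between (f df : R -> R) (x y : R) :
  (forall t, between x y t -> is_derive t 1 f (df t)) ->
  exists2 c, between x y c & f y - f x = df c * (y - x).
Proof.
have mvt (a b : R) : a <= b -> (forall t, a <= t <= b -> is_derive t 1 f (df t)) ->
    exists2 c, a <= c <= b & f b - f a = df c * (b - a).
  move=> ab fab.
  have fab' t : t \in `]a, b[%R -> is_derive t 1 f (df t).
    by rewrite in_itv /= => /andP[ta tb]; apply: fab; rewrite !ltW.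
  have cf : {within `[a, b], continuous f}.
    by apply: derivable_within_continuous => t; rewrite in_itv /= => /fab [].
  by have [c] := MVT_segment ab fab' cf; rewrite in_itv /=; exists c.
move=> fxy; case: (leP x y) => [xy|/ltW yx].
  have [|c cI e] := mvt x y xy; first by move=> t tI; apply: fxy; rewrite /between tI.
  by exists c => //; rewrite /between cI.
have [|c cI e] := mvt y x yx; first by move=> t tI; apply: fxy; rewrite /between tI orbT.
by exists c; [rewrite /between cI orbT | rewrite -opprB e -mulrN opprB].
Qed.

Lemma between0_bounds {z t : R} :
  between 0 z t -> `|t| <= `|z| /\ 0 <= t * z <= z ^+ 2.
Proof.
rewrite /between => /orP[] /andP[t0 tz].
  have z0 : 0 <= z by exact: le_trans tz.
  by rewrite !ger0_norm //; split=> //; apply/andP; split; nra.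
have z0 : z <= 0 by exact: le_trans tz.
by rewrite !ler0_norm ?lerN2 //; split=> //; apply/andP; split; nra.
Qed.

(* Two mean value steps, f z - f 0 = df c * z and df c - df 0 = d2f d * c,
   with 0 <= c z <= z^2; hence the constant M rather than M/2. *)
Lemma taylor2_le {f df d2f : R -> R} {r M z : R} : 0 <= M ->
  (forall t : R, `|t| < r -> is_derive t 1 f (df t)) ->
  (forall t : R, `|t| < r -> is_derive t 1 df (d2f t)) ->
  (forall t : R, `|t| < r -> d2f t <= M) ->
  `|z| < r -> f z <= f 0 + df 0 * z + M * z ^+ 2.
Proof.
move=> M0 f' df' d2fM zr.
have [c cI ef] := @MVT_between f df 0 z (fun t tI =>
  f' t (le_lt_trans (between0_bounds tI).1 zr)).
have [cz /andP[cz0 czz]] := between0_bounds cI.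
have cr := le_lt_trans cz zr.
have [d dI edf] := @MVT_between df d2f 0 c (fun t tI =>
  df' t (le_lt_trans (between0_bounds tI).1 cr)).
have dr := le_lt_trans (between0_bounds dI).1 cr.
have -> : f z = f 0 + df 0 * z + d2f d * (c * z).
  by rewrite -(subrK (f 0) (f z)) ef -(subrK (df 0) (df c)) edf; ring.
by rewrite lerD2l (le_trans (ler_wpM2r cz0 (d2fM d dr))) // ler_wpM2l.
Qed.

End RealFacts.

Section NonnegativeWeight.
Context {R : realType} (P : probability R R).
Hypothesis P_lt0 : P [set x : R | x < 0] = 0%E.

Definition nneg (y : R) : R := Num.max y 0.

Lemma nneg_ge0 y : 0 <= nneg y.
Proof. by rewrite le_max lexx orbT. Qed.

Lemma continuous_nneg : continuous nneg.
Proof. by apply: max_fun_continuous => x; [exact: cvg_id | exact: cvg_cst]. Qed.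

Lemma measurable_nneg : measurable_fun setT nneg.
Proof. exact: continuous_measurable_fun continuous_nneg. Qed.

Lemma integral_nneg {g : R -> R} : continuous g ->
  (\int[P]_x (g x)%:E = \int[P]_x (g (nneg x))%:E)%E.
Proof.
move=> cg; apply: ae_eq_integral => //.
- by apply/measurable_EFinP; exact: continuous_measurable_fun.
- apply/measurable_EFinP; apply: continuous_measurable_fun => x.
  by apply: continuous_comp; [exact: continuous_nneg | exact: cg].
exists [set x : R | x < 0]; split => //.
  rewrite (_ : [set x : R | x < 0] = `]-oo, 0[%classic); first exact: measurable_itv.
  by apply/seteqP; split => x /=; rewrite in_itv.
move=> x /= gx; rewrite ltNge; apply/negP => x0; apply: gx => _.
by rewrite /nneg max_l.
Qed.

Context {lam : R}.
Hypothesis lam_gt0 : 0 < lam.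
Hypothesis expR_lam_fin : (\int[P]_x (expR (lam * x))%:E < +oo)%E.

Let L := lam / 2.
Let L_gt0 : 0 < L. Proof. by rewrite divr_gt0. Qed.

(* Replacing [y] by [nneg y] changes nothing [P]-a.e. and makes every
   [mgf_integrand k z] with [z <= L] dominated by a multiple of
   [expR (lam * nneg y)]. *)
Definition mgf_integrand (k : nat) (z y : R) : R :=
  nneg y ^+ k * expR (z * nneg y).

Definition mgf_deriv (k : nat) (z : R) : R :=
  Rintegral P setT (mgf_integrand k z).

Lemma measurable_mgf_integrand k z : measurable_fun setT (mgf_integrand k z).
Proof.
apply: measurable_funM; first exact: measurable_funX measurable_nneg.
apply: measurableT_comp => //.
exact: measurable_funM (measurable_cst _) measurable_nneg.
Qed.

Lemma integrable_expR_nneg (C : R) :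
  P.-integrable setT (EFin \o (fun y => C * expR (lam * nneg y))).
Proof.
suff h : P.-integrable setT (EFin \o (fun y => expR (lam * nneg y))).
  by apply: eq_integrable (integrableZl measurableT C h).
apply/integrableP; split.
  apply/measurable_EFinP; apply: measurableT_comp => //.
  exact: measurable_funM (measurable_cst _) measurable_nneg.
under eq_integral do rewrite /= ger0_norm ?expR_ge0 //.
by rewrite -(integral_nneg (continuous_expRMl lam)).
Qed.

Lemma mgf_integrand_bounds k z y : z <= L ->
  0 <= mgf_integrand k z y <= k`!%:R / L ^+ k * expR (lam * nneg y).
Proof.
move=> zL; have y0 := nneg_ge0 y.
rewrite mulr_ge0 ?exprn_ge0 ?expR_ge0 //=.
have -> : lam * nneg y = L * nneg y + L * nneg y by rewrite -mulrDl -splitr.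
rewrite expRD mulrA ler_pM ?exprn_ge0 ?expR_ge0 ?exprn_le_expR //.
by rewrite ler_expR ler_wpM2r.
Qed.

Lemma integrable_mgf_integrand k {z} : z <= L ->
  P.-integrable setT (EFin \o mgf_integrand k z).
Proof.
move=> zL; apply: le_integrable (integrable_expR_nneg (k`!%:R / L ^+ k)) => //.
  by apply/measurable_EFinP; exact: measurable_mgf_integrand.
move=> y _ /=; have /andP[f0 fle] := mgf_integrand_bounds k z y zL.
by rewrite lee_fin !ger0_norm // (le_trans f0).
Qed.

Lemma is_derive_mgf_integrand k (z y : R) :
  is_derive z 1 (mgf_integrand k ^~ y) (mgf_integrand k.+1 z y).
Proof.
have := is_deriveZ (nneg y ^+ k) (is_derive_expRMr (nneg y) z).
by rewrite /mgf_integrand exprS [_ * nneg y ^+ k]mulrC -mulrA; apply.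
Qed.

Lemma partial1of2_mgf_integrand k (z y : R) :
  partial1of2 (mgf_integrand k) z y = mgf_integrand k.+1 z y.
Proof.
by have := is_derive_mgf_integrand k z y; rewrite partial1of2E => ?; rewrite derive_val.
Qed.

Lemma is_derive_mgf_deriv k [x : R] : `|x| < L ->
  is_derive x 1 (mgf_deriv k) (mgf_deriv k.+1 x).
Proof.
rewrite ltr_norml => xI.
have xI' : `]-L, L[%classic x by rewrite /= in_itv.
have integ t : `]-L, L[%classic t -> P.-integrable setT (EFin \o mgf_integrand k t).
  by rewrite /= in_itv /= => /andP[_ /ltW]; exact: integrable_mgf_integrand.
have der t y : `]-L, L[%classic t -> setT y -> derivable (mgf_integrand k ^~ y) t 1.
  by move=> _ _; case: (is_derive_mgf_integrand k t y).
have dom0 y : 0 <= k.+1`!%:R / L ^+ k.+1 * expR (lam * nneg y).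
  by rewrite mulr_ge0 ?expR_ge0 ?divr_ge0 ?exprn_ge0 ?ltW.
have dom t y : `]-L, L[%classic t -> setT y ->
    `|partial1of2 (mgf_integrand k) t y| <= k.+1`!%:R / L ^+ k.+1 * expR (lam * nneg y).
  rewrite /= in_itv /= => /andP[_ /ltW tL] _.
  rewrite partial1of2_mgf_integrand.
  by have /andP[f0 fle] := mgf_integrand_bounds k.+1 t y tL; rewrite ger0_norm.
have dom_int := integrable_expR_nneg (k.+1`!%:R / L ^+ k.+1).
apply: DeriveDef.
  by have := derivable_under_integral measurableT xI' integ der dom0 dom_int dom; apply.
rewrite -derive1E.
rewrite (differentiation_under_integral measurableT xI' integ der dom0 dom_int dom).
by apply: eq_Rintegral => y _; rewrite partial1of2_mgf_integrand.
Qed.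

Lemma mgfE : mgf P = mgf_deriv 0.
Proof.
apply/funext => z; rewrite /mgf (integral_nneg (continuous_expRMl z)).
by congr fine; apply: eq_integral => y _; rewrite /mgf_integrand expr0 mul1r.
Qed.

Lemma integral_expRM z : z <= L ->
  (\int[P]_x (expR (z * x))%:E = (mgf_deriv 0 z)%:E)%E.
Proof.
move=> zL; rewrite (integral_nneg (continuous_expRMl z)) /mgf_deriv /Rintegral.
have fin := integrable_fin_num measurableT (integrable_mgf_integrand 0 zL).
rewrite fineK //.
by apply: eq_integral => y _; rewrite /mgf_integrand expr0 mul1r.
Qed.

Lemma mgf_deriv0_0 : mgf_deriv 0 0 = 1.
Proof.
rewrite /mgf_deriv /Rintegral (eq_integral (fun _ => 1%:E)); last first.
  by move=> y _; rewrite /mgf_integrand expr0 mul0r expR0 mulr1.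
rewrite integral_cst // mul1e.
by apply: (@eq_trans _ _ (fine 1%E)) => //; congr fine; exact: probability_setT.
Qed.

Lemma mgf_deriv1_0 : (\int[P]_x x%:E = 1%:E)%E -> mgf_deriv 1 0 = 1.
Proof.
move=> mean1; rewrite /mgf_deriv /Rintegral (eq_integral (fun y => (nneg y)%:E)).
  by rewrite -(integral_nneg (fun x => cvg_id)) mean1.
by move=> y _; rewrite /mgf_integrand expr1 mul0r expR0 mulr1.
Qed.

Lemma derive2_mgf x : `|x| < L -> derive1 (derive1 (mgf P)) x = mgf_deriv 2 x.
Proof.
move=> xL; have xI : x \in `]-L, L[%R by rewrite in_itv -ltr_norml.
have near_x : \forall t \near x, derive1 (mgf P) t = mgf_deriv 1 t.
  apply: filterS (near_in_itvoo xI) => t; rewrite in_itv -ltr_norml /= => tL.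
  by have := is_derive_mgf_deriv 0 tL; rewrite mgfE derive1E => ?; rewrite derive_val.
have := is_derive_mgf_deriv 1 xL.
by rewrite derive1E (near_eq_derive _ near_x) => ?; rewrite derive_val.
Qed.

Lemma integral_expRM_le {S z : R} : 0 <= S ->
  (forall t, `|t| < L -> derive1 (derive1 (mgf P)) t <= 2 * S) ->
  (\int[P]_x x%:E = 1%:E)%E -> `|z| < L ->
  (\int[P]_x (expR (z * x))%:E <= (1 + z + 2 * S * z ^+ 2)%:E)%E.
Proof.
move=> S0 mgf2_le mean1 zL.
rewrite integral_expRM; last exact: le_trans (ler_norm z) (ltW zL).
have d2_le t : `|t| < L -> mgf_deriv 2 t <= 2 * S.
  by move=> tL; rewrite -derive2_mgf // mgf2_le.
have := taylor2_le (mulr_ge0 (ler0n _ 2) S0)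
  (is_derive_mgf_deriv 0) (is_derive_mgf_deriv 1) d2_le zL.
by rewrite lee_fin mgf_deriv0_0 mgf_deriv1_0 // mul1r.
Qed.

End NonnegativeWeight.

Section QuadraticBounds.
Context {R : realFieldType}.

Lemma linquad_le0 {a S z : R} : -a <= z <= 0 -> 0 <= S -> S * a <= 1 / 2 ->
  z + 2 * S * z ^+ 2 <= 0.
Proof.
move=> /andP[az z0] S0 Sa; have Sz : 0 <= 1 + 2 * S * z by nra.
by nra.
Qed.

Lemma linquad_le {a S z : R} : 0 <= z <= a / 2 -> 0 <= S -> S * a <= 1 / 2 ->
  z + 2 * S * z ^+ 2 <= 3 / 2 * z.
Proof.
move=> /andP[z0 za] S0 Sa; have Sz : S * z <= 1 / 4 by nra.
by nra.
Qed.

End QuadraticBounds.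

Section SlotShift.
Context {R : realType} {n : nat} {Nw : 'I_n -> nat}.
Hypothesis Nw_gt0 : forall i, (0 < Nw i)%N.

Let N : R := (Ntot Nw)%:R.

Lemma total_weight_allocate (load : 'I_n -> R) k w :
  total_weight (allocate load k w) = total_weight load + w.
Proof.
rewrite /total_weight /allocate (bigD1 k) //= eqxx [in RHS](bigD1 k) //=.
rewrite addrAC; congr (_ + _ + _).
by apply: eq_bigr => i /negbTE ->.
Qed.

Definition slot_shift (a : R) (k : 'I_n) (s : slot Nw) : R :=
  a / N - (if tag s == k then a / (Nw (tag s))%:R else 0).

Lemma Psi_allocate a (load : 'I_n -> R) k w :
  Psi Nw a (allocate load k w) =
  \sum_(s : slot Nw) expR (- a * xs load s) * expR (slot_shift a k s * w).
Proof.
apply: eq_bigr => s _; rewrite -expRD /xs /value total_weight_allocate /allocate.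
by rewrite /slot_shift; case: eqP => _; congr expR; rewrite ?mulrDl; ring.
Qed.

Lemma Nw_le_Ntot i : (Nw i <= Ntot Nw)%N.
Proof. by rewrite /Ntot (bigD1 i) //= leq_addr. Qed.

Lemma Nw_addn_le_Ntot {i k} : i != k -> (Nw i + Nw k <= Ntot Nw)%N.
Proof.
move=> ik; rewrite /Ntot (bigD1 i) //= leq_add2l (bigD1 k) 1?eq_sym //=.
exact: leq_addr.
Qed.

Context {S a : R}.
Hypotheses (S_ge0 : 0 <= S) (a_gt0 : 0 < a) (Sa_le : S * a <= 1 / 2).

Lemma slot_shift_own_bin_bounds (s : slot Nw) :
  - a <= a / N - a / (Nw (tag s))%:R <= 0.
Proof.
have Ni_ge1 : 1 <= (Nw (tag s))%:R :> R by rewrite ler1n.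
have NiN : (Nw (tag s))%:R <= N by rewrite ler_nat Nw_le_Ntot.
have N_gt0 : 0 < N by apply: lt_le_trans NiN; apply: lt_le_trans Ni_ge1.
have Ni_gt0 : 0 < (Nw (tag s))%:R :> R by rewrite ltr0n Nw_gt0.
have u_le : a / (Nw (tag s))%:R <= a by rewrite ler_pdivrMr // ler_pMr.
have vu : a / N <= a / (Nw (tag s))%:R by rewrite ler_pM2l // lef_pV2 ?posrE.
have v_ge0 : 0 <= a / N by rewrite divr_ge0 ?ltW.
by apply/andP; split; lra.
Qed.

Lemma slot_shift_other_bin_bounds {i k : 'I_n} : i != k ->
  0 <= a / N <= a / 2.
Proof.
move=> ik; have N_ge2 : 2 <= N.
  rewrite (ler_nat R 2); apply: leq_trans _ (Nw_addn_le_Ntot ik).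
  by rewrite -addn1 leq_add.
have N_gt0 : 0 < N by apply: lt_le_trans N_ge2.
by rewrite divr_ge0 ?(ltW a_gt0) ?(ltW N_gt0) //= ler_pM2l // lef_pV2 ?posrE.
Qed.

Lemma normr_slot_shift_le k (s : slot Nw) : `|slot_shift a k s| <= a.
Proof.
rewrite /slot_shift; case: eqP => [_|/eqP sk].
  have /andP[lo hi] := slot_shift_own_bin_bounds s.
  by rewrite ler_norml lo (le_trans hi (ltW a_gt0)).
have /andP[z0 za] := slot_shift_other_bin_bounds sk.
rewrite subr0 ger0_norm // (le_trans za) // ler_pdivrMr // ler_pMr //.
by rewrite ler1n.
Qed.

Lemma slot_shift_quadratic_le k (s : slot Nw) :
  slot_shift a k s + 2 * S * slot_shift a k s ^+ 2 <= 3 * a / (2 * N).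
Proof.
rewrite /slot_shift; case: eqP => [_|/eqP sk].
  rewrite (le_trans (linquad_le0 (slot_shift_own_bin_bounds s) S_ge0 Sa_le)) //.
  by rewrite divr_ge0 ?mulr_ge0 ?ler0n ?ltW.
have -> : 3 * a / (2 * N) = 3 / 2 * (a / N) by rewrite invfM; ring.
by rewrite subr0 (linquad_le (slot_shift_other_bin_bounds sk) S_ge0 Sa_le).
Qed.

End SlotShift.

Section PotentialDrift.
Context {R : realType} {n : nat} {Nw : 'I_n -> nat} {P : probability R R}.
Context {lam S a : R}.
Hypotheses (Nw_gt0 : forall i, (0 < Nw i)%N) (P_lt0 : P [set x : R | x < 0] = 0%E)
  (mean1 : (\int[P]_x x%:E = 1%:E)%E) (lam_gt0 : 0 < lam)
  (expR_lam_fin : (\int[P]_x (expR (lam * x))%:E < +oo)%E) (S_ge0 : 0 <= S)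
  (mgf2_le : forall z : R, `|z| < lam / 2 -> derive1 (derive1 (mgf P)) z <= 2 * S)
  (a_gt0 : 0 < a) (a_lt : a < lam / 2) (Sa_le : S * a <= 1 / 2).

Let growth := 1 + 3 * a / (2 * (Ntot Nw)%:R).

Lemma integral_Psi_allocate_le (load : 'I_n -> R) k :
  (\int[P]_x (Psi Nw a (allocate load k x))%:E <= (growth * Psi Nw a load)%:E)%E.
Proof.
under eq_integral do rewrite Psi_allocate -sumEFin.
have term_ge0 (s : slot Nw) x : setT x ->
    (0 <= (expR (- a * xs load s) * expR (slot_shift a k s * x))%:E)%E.
  by move=> _; rewrite lee_fin mulr_ge0 ?expR_ge0.
have term_mfun (s : slot Nw) : measurable_fun setT
    (fun x => (expR (- a * xs load s) * expR (slot_shift a k s * x))%:E).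
  apply/measurable_EFinP; apply: continuous_measurable_fun => x.
  exact: continuousM (cvg_cst _) (continuous_expRMl _ x).
rewrite ge0_integral_sum //= /Psi mulr_sumr -sumEFin; apply: lee_sum => s _.
under eq_integral do rewrite EFinM.
rewrite ge0_integralZl_EFin ?expR_ge0 //; last first.
  by apply/measurable_EFinP; exact: continuous_measurable_fun (continuous_expRMl _).
rewrite (mulrC growth) EFinM; apply: lee_wpmul2l; first by rewrite lee_fin expR_ge0.
have shift_lt : `|slot_shift a k s| < lam / 2.
  exact: le_lt_trans (normr_slot_shift_le Nw_gt0 a_gt0 k s) a_lt.
apply: le_trans
  (integral_expRM_le _ P_lt0 lam_gt0 expR_lam_fin S_ge0 mgf2_le mean1 shift_lt) _.
by rewrite lee_fin -addrA lerD2l (slot_shift_quadratic_le Nw_gt0 S_ge0 a_gt0 Sa_le).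
Qed.

Lemma expected_next_Psi_le (p : 'I_n -> R) tb (load : 'I_n -> R) :
  (forall i, 0 <= p i) -> \sum_(i < n) p i = 1 ->
  (expected_next_Psi Nw P id tb p a load <= (growth * Psi Nw a load)%:E)%E.
Proof.
move=> p_ge0 p_sum1; rewrite /expected_next_Psi.
apply: (@le_trans _ _
  (\sum_(i < n) \sum_(j < n) (p i * p j * (growth * Psi Nw a load))%:E)%E).
  apply: lee_sum => i _; apply: lee_sum => j _; rewrite [in X in (_ <= X)%E]EFinM.
  apply: lee_wpmul2l; first by rewrite lee_fin mulr_ge0.
  exact: integral_Psi_allocate_le.
under eq_bigr do rewrite sumEFin.
rewrite sumEFin lee_fin.
under eq_bigr do rewrite -mulr_suml -mulr_sumr p_sum1 mulr1.
by rewrite -mulr_suml p_sum1 mul1r.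
Qed.

End PotentialDrift.

Theorem mainTheorem10 (R : realType) (n : nat) (Nw : 'I_n -> nat)
    (alpha beta : R) (p : 'I_n -> R) (P : probability R R)
    (lam S a : R) (tb : 'I_n -> 'I_n -> bool) (load : 'I_n -> R) :
  (forall i, (0 < Nw i)%N) ->
  0 < alpha -> 0 < beta ->
  (forall i, 0 <= p i) -> \sum_(i < n) p i = 1 ->
  biased Nw alpha beta p ->
  P [set x : R | x < 0]%classic = 0%E ->
  (\int[P]_x x%:E = 1%:E)%E ->
  0 < lam ->
  (\int[P]_x (expR (lam * x))%:E < +oo)%E ->
  1 <= S ->
  (forall z : R, `|z| < lam / 2 -> derive1 (derive1 (mgf P)) z <= 2 * S) ->
  (forall i, 0 <= load i) ->
  0 < a -> a < lam / 2 -> S * a <= 1 / 2 ->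
  (expected_next_Psi Nw P id tb p a load - (Psi Nw a load)%:E <=
     (3 * a / (2 * (Ntot Nw)%:R) * Psi Nw a load)%:E)%E.
Proof.
move=> Nw_gt0 _ _ p_ge0 p_sum1 _ P_lt0 mean1 lam_gt0 expR_lam_fin S_ge1 mgf2_le _.
move=> a_gt0 a_lt Sa_le.
have S_ge0 : 0 <= S by exact: le_trans S_ge1.
have := expected_next_Psi_le Nw_gt0 P_lt0 mean1 lam_gt0 expR_lam_fin S_ge0 mgf2_le
  a_gt0 a_lt Sa_le p tb load p_ge0 p_sum1.
by rewrite leeBlDr // -EFinD mulrDl mul1r addrC.
Qed.
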